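(* Let $T\in(0,\infty)$, $n\in\mathbb N$, $s\in[0,T)$, $t\in[0,s]$, and let $\psi\colon[0,T]\to[0,\infty]$ be non-increasing. Then $$\sum_{r\in[s,T]}q^{n,[s,T]}(r)\,\psi(r)\le\sum_{r\in[t,T]}q^{n,[t,T]}(r)\,\psi(r).$$
   Context: For $n\in\mathbb N$ let $c^n_1,\dots,c^n_n\in[-1,1]$ be the $n$ distinct roots of the Legendre polynomial $x\mapsto\frac{1}{2^nn!}\frac{d^n}{dx^n}[(x^2-1)^n]$. For $a\in\mathbb R$, $b\in[a,\infty)$ let $q^{n,[a,b]}\colon[a,b]\to\mathbb R$ be $q^{n,[a,b]}(t)=\int_a^b\prod_{i\in\{1,\dots,n\},\,c^n_i\neq\frac{2t-(a+b)}{b-a}}\frac{2x-(b-a)c^n_i-(a+b)}{2t-(b-a)c^n_i-(a+b)}\,dx$ if $a<b$ and $\frac{2t-(a+b)}{b-a}\in\{c^n_1,\dots,c^n_n\}$, and $q^{n,[a,b]}(t)=0$ otherwise (Gauss–Legendre weights with $n$ nodes on $[a,b]$). Sums $\sum_{r\in[a,b]}$ range over the finitely many $r$ with nonzero weight; convention $0\cdot\infty=0$. *)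

From HB Require Import structures.
From mathcomp Require Import all_boot all_order all_algebra.
From mathcomp Require Import all_classical all_reals all_analysis.
Set Implicit Arguments. Unset Strict Implicit. Unset Printing Implicit Defensive.
Import Order.TTheory GRing.Theory Num.Theory.
Import numFieldNormedType.Exports.
Local Open Scope classical_set_scope.
Local Open Scope ring_scope.

Definition legendre (R : realType) (n : nat) : {poly R} :=
  ((2 ^+ n * (n`!)%:R)^-1) *: (('X ^+ 2 - 1) ^+ n)^`(n).

Definition legendre_roots (R : realType) (n : nat) : seq R :=
  finmap.enum_fset (fset_set [set c : R | root (legendre R n) c]).

Definition gl_weight (R : realType) (n : nat) (a b t : R) : R :=
  let x := (2 * t - (a + b)) / (b - a) in
  if (a < b) && (x \in legendre_roots R n) then
    (\int[lebesgue_measure]_(y in `[a, b])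
       \prod_(c <- legendre_roots R n | c != x)
          ((2 * y - (b - a) * c - (a + b)) / (2 * t - (b - a) * c - (a + b))))
  else 0.

(* \sum_{r in [a,b]} q^{n,[a,b]}(r) psi(r), over the finitely many r with
   nonzero weight, in extended reals (mathcomp: 0 * +oo = 0) *)
Definition gl_sum (R : realType) (n : nat) (a b : R) (psi : R -> \bar R) : \bar R :=
  \big[adde/0%E]_(r <- finmap.enum_fset (fset_set [set r : R | r \in `[a, b]%classic /\ gl_weight n a b r != 0]))
      ((gl_weight n a b r)%:E * psi r)%E.

From HB Require Import structures.
From mathcomp Require Import all_boot all_order all_algebra.
From mathcomp Require Import all_classical all_reals all_analysis.
From mathcomp Require Import ring lra zify.
From mathcomp Require cauchyreals.
Import Order.TTheory GRing.Theory Num.Theory.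
Import numFieldNormedType.Exports.
Local Open Scope classical_set_scope.
Local Open Scope ring_scope.
Set Implicit Arguments. Unset Strict Implicit. Unset Printing Implicit Defensive.

(* The Gauss-Legendre rule on [a, b] is the affine image of the rule on
   [-1, 1]: its nodes are ((b - a) c + (a + b)) / 2 and its weights
   (b - a) / 2 * w_c, where c runs over the roots of P_n.  These roots are
   simple (Rolle's theorem applied n times to (x^2 - 1)^n), and P_n is
   orthogonal to all polynomials of degree < n (Rodrigues' formula and
   repeated integration by parts).  Hence the rule is exact up to degree
   2n - 1, so w_c = \int L_c = \int L_c^2 >= 0 for the Lagrange basis
   polynomial L_c.  Lowering the left endpoint from s to t multiplies every
   weight by (T - t) / (T - s) >= 1 and moves every node to the left, where
   the nonnegative non-increasing psi is larger. *)

Section PolyIntegral.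
Variable R : numFieldType.
Implicit Types (p q F : {poly R}) (a b : R).

Definition antideriv p : {poly R} :=
  \poly_(i < (size p).+1) (if i is j.+1 then p`_j / j.+1%:R else 0).

Lemma antiderivK p : (antideriv p)^`() = p.
Proof.
apply/polyP => i; rewrite coef_deriv coef_poly.
case: ltnP => [_|le_p_i]; last by rewrite mul0rn nth_default.
by rewrite /= -(mulr_natr (p`_i / _)) divfK // pnatr_eq0.
Qed.

Lemma deriv_eq0 p : p^`() = 0 -> p = (p`_0)%:P.
Proof.
move=> p'0; apply/polyP => -[|i]; rewrite coefC //=.
have /eqP := congr1 (fun r : {poly R} => r`_i) p'0.
by rewrite coef_deriv coef0 mulrn_eq0 /= => /eqP.
Qed.

Definition poly_integral p a b := (antideriv p).[b] - (antideriv p).[a].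

Lemma poly_integralE p F a b : F^`() = p -> poly_integral p a b = F.[b] - F.[a].
Proof.
move=> F'p.
have /deriv_eq0 cE : (F - antideriv p)^`() = 0 by rewrite derivB antiderivK F'p subrr.
rewrite -[F](subrK (antideriv p)) cE /poly_integral !hornerE; ring.
Qed.

Lemma poly_integral0 a b : poly_integral 0 a b = 0.
Proof. by rewrite (poly_integralE _ _ (deriv0 _)) !horner0 subr0. Qed.

Lemma poly_integralD p q a b :
  poly_integral (p + q) a b = poly_integral p a b + poly_integral q a b.
Proof.
rewrite (poly_integralE _ _ (F := antideriv p + antideriv q)) ?derivD ?antiderivK //.
by rewrite /poly_integral !hornerD; ring.
Qed.

Lemma poly_integralZ k p a b : poly_integral (k *: p) a b = k * poly_integral p a b.
Proof.
rewrite (poly_integralE _ _ (F := k *: antideriv p)) ?derivZ ?antiderivK //.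
by rewrite /poly_integral !hornerZ; ring.
Qed.

Lemma poly_integral_parts p q a b : poly_integral (p^`() * q) a b =
  (p * q).[b] - (p * q).[a] - poly_integral (p * q^`()) a b.
Proof.
rewrite (poly_integralE _ _ (F := p * q - antideriv (p * q^`()))); last first.
  by rewrite derivB antiderivK derivM addrK.
by rewrite /poly_integral !hornerE; ring.
Qed.

Lemma poly_integral_comp_affine p u v a b : u != 0 ->
  poly_integral (p \Po (u *: 'X + v%:P)) a b =
  u^-1 * poly_integral p (u * a + v) (u * b + v).
Proof.
move=> u0; set l := u *: 'X + v%:P.
rewrite (poly_integralE _ _ (F := u^-1 *: (antideriv p \Po l))); last first.
  rewrite derivZ deriv_comp antiderivK derivD derivZ derivX derivC addr0.
  by rewrite -scalerAr mulr1 scalerA mulVf // scale1r.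
by rewrite /poly_integral !hornerZ !horner_comp !hornerE -mulrBr.
Qed.

End PolyIntegral.

Section PolyRoots.
Variable R : fieldType.
Implicit Types (p : {poly R}) (a : R).

Lemma dvdp_deriv_XsubC_exp a m p :
  ('X - a%:P) ^+ m.+1 %| p -> ('X - a%:P) ^+ m %| p^`().
Proof.
case/dvdpP => g ->; rewrite derivM deriv_exp derivXsubC mul1r /=.
apply: dvdp_add; first by rewrite exprS mulrA dvdp_mull.
by rewrite -mulr_natr mulrA dvdp_mulr // dvdp_mull.
Qed.

Lemma root_derivn_of_dvdp a m k p :
  ('X - a%:P) ^+ m %| p -> (k < m)%N -> root p^`(k) a.
Proof.
move=> dvd_p lt_km; rewrite -dvdp_XsubCl.
suff : ('X - a%:P) ^+ (m - k) %| p^`(k).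
  by apply: dvdp_trans; rewrite -[X in X %| _]expr1 dvdp_exp2l // subn_gt0.
elim: k lt_km => [|k IHk] lt_km; first by rewrite subn0.
by rewrite derivnS dvdp_deriv_XsubC_exp // subnSK ?IHk // ltnW.
Qed.

Lemma eq_lead_coef_prod_XsubC p rs : (size p <= (size rs).+1)%N ->
  all (root p) rs -> uniq_roots rs ->
  p = lead_coef p *: \prod_(z <- rs) ('X - z%:P).
Proof.
move=> size_p p_rs uniq_rs; have [q def_p] := uniq_roots_prod_XsubC p_rs uniq_rs.
rewrite def_p in size_p *.
have [->|q0] := eqVneq q 0; first by rewrite !mul0r lead_coef0 scale0r.
have omega0 : \prod_(z <- rs) ('X - z%:P) != 0 by rewrite monic_neq0 ?monic_prod_XsubC.
move: size_p; rewrite size_mul // size_prod_XsubC addnS /= => size_q.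
have size_q1 : (size q <= 1)%N by rewrite -(leq_add2r (size rs)).
by rewrite [q]size1_polyC // lead_coefM lead_coefC lead_coef_prod_XsubC mulr1 mul_polyC.
Qed.

End PolyRoots.

Section Rodrigues.
Variables (R : numFieldType) (n : nat).
Local Notation W := (('X ^+ 2 - 1) ^+ n : {poly R}).

Lemma root_derivn_rodrigues k x : (k < n)%N -> x ^+ 2 = 1 -> root W^`(k) x.
Proof.
move=> lt_kn x2; apply: (root_derivn_of_dvdp (m := n)) lt_kn.
have -> : 'X ^+ 2 - 1 = ('X - x%:P) * ('X + x%:P) :> {poly R}.
  by rewrite -subr_sqr -rmorphXn /= x2 polyC1.
by rewrite exprMn dvdp_mulr.
Qed.

Lemma poly_integral_derivn_rodrigues (q : {poly R}) k : (k <= n)%N ->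
  poly_integral (W^`(n) * q) (-1) 1 =
  (-1) ^+ k * poly_integral (W^`(n - k) * q^`(k)) (-1) 1.
Proof.
elim: k => [|k IHk] lt_kn; first by rewrite subn0 expr0 mul1r.
have lt_nSk_n : (n - k.+1 < n)%N by rewrite ltn_subrL; case: n lt_kn.
have sqrN1 : (-1 : R) ^+ 2 = 1 by rewrite sqrrN expr1n.
rewrite IHk ?(ltnW lt_kn) // -(subnSK lt_kn) derivnS poly_integral_parts !hornerM.
rewrite (rootP (root_derivn_rodrigues lt_nSk_n (expr1n _ 2))).
rewrite (rootP (root_derivn_rodrigues lt_nSk_n sqrN1)).
by rewrite -derivnS !mul0r subrr sub0r [(-1) ^+ k.+1]exprS mulN1r mulrN mulNr.
Qed.

Lemma rodrigues_orthogonal (q : {poly R}) : (size q <= n)%N ->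
  poly_integral (W^`(n) * q) (-1) 1 = 0.
Proof.
move=> size_q; rewrite (poly_integral_derivn_rodrigues q (leqnn n)).
by rewrite (derivn_poly0 size_q) mulr0 poly_integral0 mulr0.
Qed.

End Rodrigues.

Lemma mem_enum_fset_set_seq (T : choiceType) (s : seq T) x :
  (x \in finmap.enum_fset (fset_set [set` s])) = (x \in s).
Proof. by rewrite (in_fset_set (finite_seq s)); apply/idP/idP; rewrite inE. Qed.

Section RealRoots.
Variable R : realType.
Implicit Types p : {poly R}.

Lemma deriv_root_between p a b : a < b -> root p a -> root p b ->
  exists2 c, a < c < b & root p^`() c.
Proof.
move=> lt_ab /rootP pa /rootP pb.
have [c c_ab dp_c] : exists2 c, c \in `]a, b[ & is_derive c 1 (horner p) 0.
  apply: (Rolle lt_ab); last by rewrite pa pb.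
  - by move=> x _; exact: derivable_horner.
  - by apply/continuous_subspaceT => x; exact: continuous_horner.
exists c; first by rewrite in_itv /= in c_ab.
apply/rootP; rewrite -(derive_val (is_derive := is_derive_poly p c)).
by rewrite (derive_val (is_derive := dp_c)).
Qed.

Lemma deriv_roots_interlace p x s y :
  path <%R x (rcons s y) -> all (root p) (x :: rcons s y) ->
  exists s', [/\ size s' = (size s).+1, all (root p^`()) s' & path <%R x (rcons s' y)].
Proof.
elim: s x => [|z s IHs] x /=.
  rewrite andbT => lt_xy /and3P[px py _].
  have [c /andP[lt_xc lt_cy] p'c] := deriv_root_between lt_xy px py.
  by exists [:: c]; rewrite /= lt_xc lt_cy p'c.
move=> /andP[lt_xz path_z] /andP[px /[dup] roots_z /andP[pz _]].
have [c /andP[lt_xc lt_cz] p'c] := deriv_root_between lt_xz px pz.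
have [s' [size_s' roots_s' path_s']] := IHs z path_z roots_z.
exists (c :: s'); split=> /=; first by rewrite size_s'.
  by rewrite p'c.
by rewrite lt_xc (path_le lt_trans lt_cz).
Qed.

End RealRoots.

Section LegendreRoots.
Variables (R : realType) (n : nat).
Local Notation W := (('X ^+ 2 - 1) ^+ n : {poly R}).
Local Notation P := (legendre R n).

Lemma rodrigues_derivn_roots k : (k <= n)%N ->
  exists s, [/\ size s = k, all (root W^`(k)) s & path <%R (-1) (rcons s 1)].
Proof.
elim: k => [|k IHk] le_kn.
  by exists [::]; split=> //=; rewrite andbT; lra.
have [s [size_s roots_s path_s]] := IHk (ltnW le_kn).
have [|s' [size_s' roots_s' path_s']] := deriv_roots_interlace (p := W^`(k)) path_s.
  rewrite /= all_rcons roots_s andbT.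
  rewrite !root_derivn_rodrigues ?expr1n ?sqrrN ?expr1n //.
by exists s'; rewrite derivnS size_s' size_s.
Qed.

Lemma legendre_scale_neq0 : (2 ^+ n * n`!%:R : R)^-1 != 0.
Proof. by rewrite invr_eq0 mulf_neq0 ?expf_neq0 ?pnatr_eq0 -?lt0n ?fact_gt0. Qed.

Lemma size_legendre : size P = n.+1.
Proof.
have W_monic : W \is monic by rewrite -polyC1 monic_exp // monicXnsubC.
have : (size W).-1 = (2 * n)%N by rewrite size_exp -polyC1 size_XnsubC.
have : (0 < size W)%N by rewrite size_poly_gt0 monic_neq0.
rewrite /legendre size_scale ?legendre_scale_neq0 // cauchyreals.size_derivn.
by case: (size W) => // m _ /= ->; lia.
Qed.

Lemma legendre_neq0 : P != 0.
Proof. by rewrite -size_poly_eq0 size_legendre. Qed.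

Lemma legendre_simple_roots : exists s, [/\ size s = n, uniq s & all (root P) s].
Proof.
have [s [size_s roots_s]] := rodrigues_derivn_roots (leqnn n).
rewrite rcons_path => /andP[/path_sorted/lt_sorted_uniq uniq_s _].
exists s; split=> //; apply/allP => x /(allP roots_s).
by rewrite /legendre rootZ ?legendre_scale_neq0.
Qed.

Lemma legendre_roots_spec : exists s,
  [/\ perm_eq (legendre_roots R n) s, size s = n &
       P = lead_coef P *: \prod_(z <- s) ('X - z%:P)].
Proof.
have [s [size_s uniq_s roots_s]] := legendre_simple_roots.
have P_prod : P = lead_coef P *: \prod_(z <- s) ('X - z%:P).
  by apply: eq_lead_coef_prod_XsubC; rewrite ?size_legendre ?size_s ?uniq_rootsE.
have roots_P : [set c | root P c] = [set` s].
  apply/funext => x /=; rewrite P_prod rootZ ?lead_coef_eq0 ?legendre_neq0 //.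
  by rewrite root_prod_XsubC.
exists s; split=> //; apply: uniq_perm => //; first exact: finmap.fset_uniq.
by move=> x; rewrite /legendre_roots roots_P mem_enum_fset_set_seq.
Qed.

Lemma size_legendre_roots : size (legendre_roots R n) = n.
Proof. by have [s [/perm_size -> ->]] := legendre_roots_spec. Qed.

Lemma legendre_prod_roots :
  P = lead_coef P *: \prod_(z <- legendre_roots R n) ('X - z%:P).
Proof. by have [s [/(perm_big _) -> _]] := legendre_roots_spec. Qed.

Lemma legendre_roots_orthogonal (q : {poly R}) : (size q <= n)%N ->
  poly_integral (\prod_(z <- legendre_roots R n) ('X - z%:P) * q) (-1) 1 = 0.
Proof.
move=> size_q.
have -> : \prod_(z <- legendre_roots R n) ('X - z%:P) = (lead_coef P)^-1 *: P.
  by rewrite {2}legendre_prod_roots scalerA mulVf ?scale1r // lead_coef_eq0 legendre_neq0.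
by rewrite -!scalerAl !poly_integralZ rodrigues_orthogonal ?mulr0.
Qed.

End LegendreRoots.

Section LagrangeBasis.
Variable R : fieldType.
Implicit Types (S : seq R) (c d x : R).

Definition lagrange_basis S c : {poly R} :=
  (\prod_(d <- S | d != c) (c - d)^-1) *: \prod_(d <- S | d != c) ('X - d%:P).

Lemma horner_lagrange_basis S c x :
  (lagrange_basis S c).[x] = \prod_(d <- S | d != c) ((c - d)^-1 * (x - d)).
Proof.
rewrite hornerZ horner_prod big_split /=; congr (_ * _).
by apply: eq_bigr => d _; rewrite hornerXsubC.
Qed.

Lemma lagrange_basis_id S c : (lagrange_basis S c).[c] = 1.
Proof.
by rewrite horner_lagrange_basis big1 // => d dc; rewrite mulVf // subr_eq0 eq_sym.
Qed.

Lemma lagrange_basis_eq0 S c d : d \in S -> d != c -> (lagrange_basis S c).[d] = 0.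
Proof.
by move=> dS dc; rewrite horner_lagrange_basis (big_rem d) //= dc subrr !mulr0 mul0r.
Qed.

Lemma size_lagrange_basis S c : uniq S -> c \in S ->
  (size (lagrange_basis S c) <= size S)%N.
Proof.
move=> uniq_S cS; apply: leq_trans (size_scale_leq _ _) _.
rewrite -big_filter size_prod_XsubC -rem_filter // size_rem //.
by case: (S) cS.
Qed.

End LagrangeBasis.

Section GaussWeights.
Variable R : numFieldType.

Lemma poly_integral_lagrange_basis_sqr (S : seq R) c (a b : R) :
  uniq S -> c \in S ->
  (forall q : {poly R}, (size q <= size S)%N ->
     poly_integral (\prod_(z <- S) ('X - z%:P) * q) a b = 0) ->
  poly_integral (lagrange_basis S c) a b = poly_integral (lagrange_basis S c ^+ 2) a b.
Proof.
move=> uniq_S cS orth_S; set L := lagrange_basis S c.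
(* L (1 - L) vanishes on S, so it is a multiple of \prod_(z <- S) ('X - z%:P)
   by a polynomial of size <= size S, and L = L^2 + L (1 - L). *)
have roots_S : all (root (L * (1 - L))) S.
  apply/allP => d dS; rewrite rootM /root.
  have [->|dc] := eqVneq d c; last by rewrite lagrange_basis_eq0 ?eqxx.
  by rewrite hornerD hornerN hornerC lagrange_basis_id subrr eqxx orbT.
have [Q LQ] : exists Q, L * (1 - L) = \prod_(z <- S) ('X - z%:P) * Q.
  have [Q ->] := uniq_roots_prod_XsubC roots_S (etrans (uniq_rootsE S) uniq_S).
  by exists Q; rewrite mulrC.
have size_L : (size L <= size S)%N := size_lagrange_basis uniq_S cS.
have size_1L : (size (1 - L)%R <= size S)%N.
  apply: leq_trans (size_polyD _ _) _.
  by rewrite size_polyN size_poly1 geq_max size_L andbT; case: (S) cS.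
have size_Q : (size Q <= size S)%N.
  have [->|Q0] := eqVneq Q 0; first by rewrite size_poly0.
  have omega0 : \prod_(z <- S) ('X - z%:P) != 0 by rewrite monic_neq0 ?monic_prod_XsubC.
  have := size_polyMleq L (1 - L).
  rewrite LQ size_mul // size_prod_XsubC.
  by move: size_L size_1L; move: (size L) (size (1 - L)%R) (size Q) => l l' m; lia.
have split_L : L = L ^+ 2 + L * (1 - L) by rewrite mulrBr mulr1 expr2 addrC subrK.
by rewrite {1}split_L poly_integralD LQ orth_S // addr0.
Qed.

End GaussWeights.

Section RealPolyIntegral.
Variable R : realType.
Implicit Types (p : {poly R}) (a b : R).

Lemma Rintegral_poly p a b : a < b ->
  \int[lebesgue_measure]_(x in `[a, b]) p.[x] = poly_integral p a b.
Proof.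
move=> lt_ab; rewrite /Rintegral (@continuous_FTC2 _ _ (horner (antideriv p))) //.
- by apply: continuous_subspaceT; exact: continuous_horner.
- split => [x _| |].
  + exact: derivable_horner.
  + by apply: cvg_at_right_filter; exact: continuous_horner.
  + by apply: cvg_at_left_filter; exact: continuous_horner.
- by move=> x _; rewrite -derivE antiderivK.
Qed.

Lemma poly_integral_sqr_ge0 p a b : a < b -> 0 <= poly_integral (p ^+ 2) a b.
Proof.
move=> lt_ab; rewrite -Rintegral_poly //.
by apply: Rintegral_ge0 => x _; rewrite hornerE sqr_ge0.
Qed.

End RealPolyIntegral.

Section GaussLegendre.
Variables (R : realType) (n : nat).
Local Notation S := (legendre_roots R n).
Implicit Types (a b c r : R).

Definition legendre_weight c := poly_integral (lagrange_basis S c) (-1) 1.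

Lemma legendre_weight_ge0 c : c \in S -> 0 <= legendre_weight c.
Proof.
move=> cS; rewrite /legendre_weight poly_integral_lagrange_basis_sqr //.
- exact: poly_integral_sqr_ge0.
- exact: finmap.fset_uniq.
by move=> q; rewrite size_legendre_roots; exact: legendre_roots_orthogonal.
Qed.

Definition gl_node a b c := ((b - a) * c + (a + b)) / 2.

Definition gl_coord a b r := (2 * r - (a + b)) / (b - a).

Lemma gl_nodeK a b : a < b -> cancel (gl_coord a b) (gl_node a b).
Proof. by move=> lt_ab r; rewrite /gl_node /gl_coord; field; rewrite subr_eq0 gt_eqF. Qed.

Lemma gl_coordK a b : a < b -> cancel (gl_node a b) (gl_coord a b).
Proof. by move=> lt_ab c; rewrite /gl_node /gl_coord; field; rewrite subr_eq0 gt_eqF. Qed.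

Lemma gl_node_itv a b c : a < b -> (a <= gl_node a b c <= b) = (-1 <= c <= 1).
Proof.
by move=> lt_ab; rewrite /gl_node; apply/idP/idP => /andP[? ?]; apply/andP; split; nra.
Qed.

Lemma gl_weight_node a b c : a < b -> c \in S ->
  gl_weight n a b (gl_node a b c) = (b - a) / 2 * legendre_weight c.
Proof.
move=> lt_ab cS; have ba0 : b - a != 0 by rewrite subr_eq0 gt_eqF.
rewrite /gl_weight /= -/(gl_coord a b _) gl_coordK // lt_ab cS /=.
set l : {poly R} := (2 / (b - a)) *: 'X + (- ((a + b) / (b - a)))%:P.
have horner_l y : l.[y] = gl_coord a b y by rewrite /l !hornerE /gl_coord; field.
transitivity (\int[lebesgue_measure]_(y in `[a, b]) (lagrange_basis S c \Po l).[y]).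
  congr Rintegral; apply/funext => y.
  rewrite horner_comp horner_lagrange_basis horner_l; apply: eq_bigr => d dc.
  have cd : c - d != 0 by rewrite subr_eq0 eq_sym.
  rewrite /gl_node /gl_coord; field.
  have -> : (b - a) * c + (a + b) - (b - a) * d - (a + b) = (b - a) * (c - d) by ring.
  by rewrite ba0 cd mulf_neq0.
rewrite Rintegral_poly // poly_integral_comp_affine; last first.
  by rewrite mulf_neq0 ?invr_eq0.
have -> : 2 / (b - a) * a + - ((a + b) / (b - a)) = -1 by field.
have -> : 2 / (b - a) * b + - ((a + b) / (b - a)) = 1 by field.
by rewrite invf_div.
Qed.

Lemma gl_support a b : a < b ->
  [set r | r \in `[a, b]%classic /\ gl_weight n a b r != 0] =
  [set` map (gl_node a b) [seq c <- S | (-1 <= c <= 1) && (legendre_weight c != 0)]].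
Proof.
move=> lt_ab; apply/funext => r /=; apply/propext; rewrite mem_setE in_itv /=; split.
- move=> [r_ab w_r]; apply/mapP; exists (gl_coord a b r); last by rewrite gl_nodeK.
  have xS : gl_coord a b r \in S.
    by apply: contraNT w_r => xS; rewrite /gl_weight /= -/(gl_coord a b r) (negPf xS) andbF.
  rewrite mem_filter xS andbT -(gl_node_itv _ lt_ab) gl_nodeK // r_ab /=.
  have := gl_weight_node lt_ab xS; rewrite gl_nodeK // => w_rE.
  by apply: contra w_r; rewrite w_rE => /eqP ->; rewrite mulr0.
- case/mapP => c; rewrite mem_filter => /andP[/andP[c_itv w_c] cS] ->.
  by rewrite gl_node_itv // gl_weight_node // !mulf_neq0 ?invr_eq0 // subr_eq0 gt_eqF.
Qed.

Lemma gl_sumE a b psi : a < b ->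
  gl_sum n a b psi = (\sum_(c <- S | ((-1 <= c <= 1) && (legendre_weight c != 0))%R)
    ((b - a) / 2 * legendre_weight c)%:E * psi (gl_node a b c))%E.
Proof.
move=> lt_ab; rewrite /gl_sum gl_support //.
set s := map _ _.
have uniq_s : uniq s.
  rewrite map_inj_uniq ?filter_uniq ?finmap.fset_uniq //.
  exact: can_inj (gl_coordK lt_ab).
have perm_s : perm_eq (finmap.enum_fset (fset_set [set` s])) s.
  apply: uniq_perm uniq_s _; first exact: finmap.fset_uniq.
  exact: mem_enum_fset_set_seq.
rewrite (perm_big (op := +%R) _ perm_s) big_map big_filter big_seq_cond [RHS]big_seq_cond.
by apply: eq_bigr => c /andP[cS _]; rewrite gl_weight_node.
Qed.

End GaussLegendre.

Theorem lemma3p1 (R : realType) (T : R) (n : nat) (s t : R) (psi : R -> \bar R)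
  (hT : 0 < T) (hs : 0 <= s) (hsT : s < T) (ht : 0 <= t) (hts : t <= s)
  (hpsi0 : forall r, 0 <= r <= T -> (0 <= psi r)%E)
  (hpsi : forall r1 r2, 0 <= r1 -> r1 <= r2 -> r2 <= T -> (psi r2 <= psi r1)%E) :
  (gl_sum n s T psi <= gl_sum n t T psi)%E.
Proof.
have htT : t < T by apply: le_lt_trans hsT.
rewrite (gl_sumE n psi hsT) (gl_sumE n psi htT) big_seq_cond [X in (_ <= X)%E]big_seq_cond.
apply: lee_sum => c /andP[cS /andP[/andP[c_ge c_le] _]].
have w_ge0 := legendre_weight_ge0 cS.
rewrite /gl_node; apply: lee_pmul.
- by rewrite lee_fin mulr_ge0 // divr_ge0 // subr_ge0 ltW.
- by apply: hpsi0; apply/andP; split; nra.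
- by rewrite lee_fin ler_wpM2r // ler_pM2r //; lra.
- by apply: hpsi; nra.
Qed.
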